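(* Let $K$ be a field (e.g. $K=\mathbb{C}$), let $r\geqslant 0$ be an integer, and let $\{a_0(n)\}_{n\in\mathbb{Z}},\ldots,\{a_r(n)\}_{n\in\mathbb{Z}}$ be arbitrary sequences of elements of $K$. Consider the set $V$ of all sequences $\{x(n)\}_{n\in\mathbb{Z}}$ of elements of $K$ satisfying \[ a_r(n)x(n+r)+\ldots+a_1(n)x(n+1)+a_0(n)x(n)=0\quad\text{for every } n\in\mathbb{Z}; \] $V$ is a $K$-vector space. Then the following are equivalent: (1) $\dim_K V=\infty$; (2) $V$ contains a lacunary sequence.
   Context: For a sequence $\{a(n)\}_{n\in\mathbb{Z}}$, its support is $\operatorname{supp}(\{a(n)\})=\{i\in\mathbb{Z}\mid a(i)\neq 0\}$. Two elements $i<j$ of the support are called consecutive if there is no $k$ in the support with $i<k<j$. A sequence is called lacunary if the differences $j-i$ between consecutive elements $i<j$ of its support can be arbitrarily large, i.e. for every $N$ there exist consecutive elements $i<j$ of the support with $j-i>N$. *)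

From HB Require Import structures.
From mathcomp Require Import all_boot all_order all_algebra.
Set Implicit Arguments. Unset Strict Implicit. Unset Printing Implicit Defensive.
Import Order.TTheory GRing.Theory Num.Theory.
Local Open Scope ring_scope.

Definition solves (K : fieldType) (r : nat) (a : 'I_r.+1 -> int -> K)
  (x : int -> K) : Prop :=
  forall n : int, \sum_(i < r.+1) a i n * x (n + (i : nat)%:Z) = 0.

Definition consecutive_supp (K : fieldType) (x : int -> K) (i j : int) : Prop :=
  [/\ i < j, x i != 0, x j != 0 & forall k : int, i < k < j -> x k = 0].

Definition lacunary (K : fieldType) (x : int -> K) : Prop :=
  forall N : nat, exists i j : int,
    consecutive_supp x i j /\ N%:Z < j - i.

Definition lin_indep (K : fieldType) (m : nat) (f : 'I_m -> int -> K) : Prop :=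
  forall c : 'I_m -> K,
    (forall n : int, \sum_(k < m) c k * f k n = 0) -> forall k, c k = 0.

(* dim_K V = infinity, for V = the solution space: V contains linearly
   independent families of every finite size. *)
Definition infinite_dim_solutions (K : fieldType) (r : nat)
  (a : 'I_r.+1 -> int -> K) : Prop :=
  forall m : nat, exists f : 'I_m -> int -> K,
    (forall k, solves a (f k)) /\ lin_indep f.

From HB Require Import structures.
From mathcomp Require Import all_boot all_order all_algebra.
From mathcomp Require Import zify.
From Stdlib Require Import Classical IndefiniteDescription.
Set Implicit Arguments. Unset Strict Implicit. Unset Printing Implicit Defensive.
Import Order.TTheory GRing.Theory Num.Theory.
Local Open Scope ring_scope.

(** A solution can be cut off just before a gap of its support longer than
    [r]: the recurrence only relates [r + 1] consecutive terms, so the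
    truncation is again a solution.  Cutting a lacunary solution at infinitely
    many such gaps gives infinitely many independent solutions.

    Conversely, finitely many independent solutions are already independent
    on a finite window [|n| <= T]: the kernels of the evaluation maps on
    growing windows form a decreasing chain of subspaces, which stabilises.
    Among [2L + 2r + 1] of them there is a combination vanishing for [|n| < L]
    and for [T < |n| <= T + r] but not on the window; truncated to the window
    it is a nonzero solution supported in the annulus [L <= |n| <= T].  The
    sum of such solutions supported in ever more distant annuli is lacunary. *)

Lemma nonincreasing_stationary (u : nat -> nat) :
  (forall i j, (i <= j)%N -> (u j <= u i)%N) ->
  exists i, forall j, (i <= j)%N -> u j = u i.
Proof.
move=> u_dec.
suff: forall d i, (u i <= d)%N -> exists i, forall j, (i <= j)%N -> u j = u i.
  by move/(_ (u 0%N) 0%N (leqnn _)).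
elim=> [|d IHd] i ud.
  by exists i => j ij; have := u_dec _ _ ij; lia.
case: (classic (forall j, (i <= j)%N -> u j = u i)) => [stat|].
  by exists i.
move=> /not_all_ex_not [j /(imply_to_and (i <= j)%N) [ij uj]].
by apply: (IHd j); have := u_dec _ _ ij; lia.
Qed.

Lemma last_supp_le (K : fieldType) (x : int -> K) (s b : int) :
  s <= b -> x s != 0 ->
  exists i, [/\ s <= i <= b, x i != 0 & forall k, i < k <= b -> x k = 0].
Proof.
move=> sb xs.
have xs' : x (b - `|b - s|%N%:Z) != 0 by rewrite (_ : b - _ = s) //; lia.
have ex_d : exists d : nat, x (b - d%:Z) != 0 by exists `|b - s|%N.
case: (ex_minnP ex_d) => d xd dmin.
exists (b - d%:Z); split=> //; first by have := dmin _ xs'; lia.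
move=> k /andP[lt_k le_k]; apply/eqP; apply: contraTT lt_k => xk.
have := dmin `|b - k|%N; rewrite (_ : b - _ = k); last by lia.
by move/(_ xk); lia.
Qed.

Lemma first_supp_ge (K : fieldType) (x : int -> K) (a t : int) :
  a <= t -> x t != 0 ->
  exists j, [/\ a <= j <= t, x j != 0 & forall k, a <= k < j -> x k = 0].
Proof.
move=> le_at xt.
have ta : - t <= - a by rewrite lerN2.
have xt' : x (- - t) != 0 by rewrite opprK.
have [i [/andP[ti ia] xi zero]] := last_supp_le (x := fun n => x (- n)) ta xt'.
exists (- i); split=> //; first lia.
by move=> k /andP[ak ki]; rewrite -[k]opprK; apply: zero; lia.
Qed.

Lemma consecutive_supp_across (K : fieldType) (x : int -> K) (s a b t : int) :
  s <= a -> a < b -> b <= t -> x s != 0 -> x t != 0 ->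
  (forall k, a < k < b -> x k = 0) ->
  exists i j, consecutive_supp x i j /\ b - a <= j - i.
Proof.
move=> sa ab bt xs xt gap.
have [i [/andP[si ia] xi zi]] := last_supp_le sa xs.
have [j [/andP[bj jt] xj zj]] := first_supp_ge bt xt.
exists i, j; split; last lia.
split=> // [|k /andP[ik kj]]; first lia.
have [ka|ak] := lerP k a; first exact/zi/andP.
by have [kb|bk] := ltrP k b; [exact/gap/andP | exact/zj/andP].
Qed.

Lemma consecutive_supp_uniq (K : fieldType) (x : int -> K) (i j j' : int) :
  consecutive_supp x i j -> consecutive_supp x i j' -> j = j'.
Proof.
move=> [ij _ xj zj] [ij' _ xj' zj'].
case: (ltgtP j j') => // [lt | lt].
  by move: xj; rewrite zj' ?eqxx // ij.
by move: xj'; rewrite zj ?eqxx // ij'.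
Qed.

Lemma lacunary_cuts (K : fieldType) (x : int -> K) (N : nat) : lacunary x ->
  exists cut : nat -> int, [/\ injective cut, forall k, x (cut k) != 0
    & forall k n, cut k < n <= cut k + N%:Z -> x n = 0].
Proof.
move=> lac.
have /functional_choice [p p_spec] : forall M : nat, exists ij : int * int,
    consecutive_supp x ij.1 ij.2 /\ M%:Z < ij.2 - ij.1.
  by move=> M; have [i [j ij]] := lac M; exists (i, j).
pose gap M := `|(p M).2 - (p M).1|%N.
(* Each chosen gap exceeds the previous one, so the chosen consecutive pairs,
   hence their left ends, are pairwise distinct. *)
pose idx k := iter k gap N.
have idx_step k : (idx k < idx k.+1)%N.
  by have [_] := p_spec (idx k); rewrite /= /gap; lia.
have idx_mono := leq_mono (homo_ltn ltn_trans idx_step).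
exists (fun k => (p (idx k)).1); split.
- move=> j k same; apply/succn_inj/(incn_inj idx_mono).
  have [cj _] := p_spec (idx j); have [ck _] := p_spec (idx k).
  rewrite same in cj.
  by rewrite /= /gap same (consecutive_supp_uniq cj ck).
- by move=> k; have [[]] := p_spec (idx k).
- move=> k n /andP[lt_n le_n]; have [[_ _ _ zero] wide] := p_spec (idx k).
  have N_le : (N <= idx k)%N by rewrite -[N]/(idx 0%N) idx_mono.
  by apply: zero; apply/andP; split=> //; lia.
Qed.

Lemma lin_indep_truncations (K : fieldType) (x : int -> K) m
    (cut : 'I_m -> int) :
  injective cut -> (forall k, x (cut k) != 0) ->
  lin_indep (fun k n => if n <= cut k then x n else 0).
Proof.
move=> cut_inj x_cut c vanish k0; apply/eqP; apply: contraT => ck0.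
have [km ckm km_max] := arg_maxP (P := fun k => c k != 0) cut ck0.
have := vanish (cut km).
rewrite (bigD1 km) //= lexx big1 ?addr0 => [/eqP|k k_km].
  by rewrite mulf_eq0 (negbTE ckm) (negbTE (x_cut km)).
have [-> | ck] := eqVneq (c k) 0; first by rewrite mul0r.
rewrite ifN ?mulr0 // -ltNge lt_neqAle; apply/andP; split; last exact: km_max.
by apply: contra k_km => /eqP/cut_inj/eqP.
Qed.

Definition annulus (lo hi : nat) : seq int :=
  [seq k%:Z | k <- iota lo (hi - lo)] ++ [seq - k%:Z | k <- iota lo (hi - lo)].

Lemma mem_annulus lo hi n : (n \in annulus lo hi) = (lo <= `|n| < hi)%N.
Proof.
apply/idP/idP => [|n_in].
  by rewrite mem_cat => /orP[] /mapP[k]; rewrite mem_iota => k_in ->; lia.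
rewrite mem_cat; apply/orP; have [n_ge0|n_lt0] := lerP 0 n; [left|right];
  by apply/mapP; exists `|n|%N; rewrite ?mem_iota; lia.
Qed.

Lemma size_annulus lo hi : size (annulus lo hi) = ((hi - lo).*2)%N.
Proof. by rewrite size_cat !size_map size_iota addnn. Qed.

Definition window (T : nat) : seq int := annulus 0 T.+1.

Lemma mem_window T n : (n \in window T) = (`|n| <= T)%N.
Proof. by rewrite mem_annulus. Qed.

Section PointEvaluation.
Variables (K : fieldType) (m : nat) (f : 'I_m -> int -> K).

Definition lin_indep_at (s : seq int) : Prop :=
  forall c : 'I_m -> K,
    {in s, forall n, \sum_k c k * f k n = 0} -> forall k, c k = 0.

Definition eval_mx (s : seq int) : 'M[K]_(m, size s) :=
  \matrix_(k, j) f k (nth 0 s j).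

Lemma mul_eval_mx_eq0 l (B : 'M[K]_(l, m)) s :
  B *m eval_mx s = 0 <-> forall i, {in s, forall n, \sum_k B i k * f k n = 0}.
Proof.
split=> [B_ker i n n_in | vanish].
  pose j := Ordinal (etrans (index_mem n s) n_in).
  have := congr1 (fun M : 'M_(l, size s) => M i j) B_ker.
  rewrite !mxE => E; rewrite -[RHS]E; apply: eq_bigr => k _.
  by rewrite mxE /= nth_index.
apply/matrixP => i j; rewrite !mxE -[RHS](vanish i _ (mem_nth 0 (ltn_ord j))).
by apply: eq_bigr => k _; rewrite mxE.
Qed.

Lemma kermx_eval_mx_subset s s' : {subset s <= s'} ->
  (kermx (eval_mx s') <= kermx (eval_mx s))%MS.
Proof.
move=> ss'; rewrite sub_kermx; apply/eqP/mul_eval_mx_eq0 => i n /ss'.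
exact: (mul_eval_mx_eq0 _ _).1 (mulmx_ker _) i n.
Qed.

Lemma exists_comb_vanishing s : (size s < m)%N ->
  exists2 c : 'I_m -> K, exists k, c k != 0
    & {in s, forall n, \sum_k c k * f k n = 0}.
Proof.
move=> small.
have : kermx (eval_mx s) != 0.
  rewrite -mxrank_eq0 mxrank_ker subn_eq0 -ltnNge.
  exact: leq_ltn_trans (rank_leq_col _) small.
case/rowV0Pn => v; rewrite sub_kermx => /eqP/mul_eval_mx_eq0 vanish /rV0Pn nz.
by exists (v 0); [ | exact: vanish].
Qed.

Lemma lin_indep_window : lin_indep f -> exists T, lin_indep_at (window T).
Proof.
move=> indep.
have window_sub T T' : (T <= T')%N -> {subset window T <= window T'}.
  by move=> le n; rewrite !mem_window => /leq_trans; apply.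
pose ker T := kermx (eval_mx (window T)).
have [T0 stat] := @nonincreasing_stationary (fun T => \rank (ker T))
  (fun T T' le => mxrankS (kermx_eval_mx_subset (window_sub T T' le))).
exists T0 => c vanish; apply: indep => n.
pose T := maxn T0 `|n|.
have ker_T0 : (ker T0 <= ker T)%MS.
  have sub_T := kermx_eval_mx_subset (window_sub _ _ (leq_maxl T0 `|n|)).
  have [_ <-] := mxrank_leqif_sup sub_T.
  by rewrite stat ?leq_maxl.
have : (\row_k c k <= ker T)%MS.
  apply: submx_trans ker_T0; rewrite sub_kermx; apply/eqP/mul_eval_mx_eq0.
  move=> i n' /vanish E; rewrite -[RHS]E.
  by apply: eq_bigr => k _; rewrite mxE.
rewrite sub_kermx => /eqP/mul_eval_mx_eq0/(_ 0 n).
rewrite mem_window => /(_ (leq_maxr _ _)) E; rewrite -[RHS]E.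
by apply: eq_bigr => k _; rewrite mxE.
Qed.

End PointEvaluation.

Definition glue (K : fieldType) (z : nat -> int -> K) (n : int) : K :=
  \sum_(k < `|n|.+1) z k n.

Lemma glue_eq_sum (K : fieldType) (z : nat -> int -> K) (n : int) (B : nat) :
  (forall k n, (`|n| < k)%N -> z k n = 0) -> (`|n| < B)%N ->
  glue z n = \sum_(k < B) z k n.
Proof.
move=> z_vanish nB.
rewrite /glue (big_ord_widen B (fun k => z k n) nB) big_mkcond.
apply: eq_bigr => k _; case: ifP => // /negbT.
by rewrite -leqNgt => /z_vanish ->.
Qed.

Section Recurrence.
Variables (K : fieldType) (r : nat) (a : 'I_r.+1 -> int -> K).

Lemma solves_scale (c : K) (x : int -> K) :
  solves a x -> solves a (fun n => c * x n).
Proof.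
move=> x_sol n; transitivity (c * \sum_(i < r.+1) a i n * x (n + (i : nat)%:Z)).
  by rewrite big_distrr; apply: eq_bigr => i _; rewrite mulrCA.
by rewrite x_sol mulr0.
Qed.

Lemma solves_sum (I : Type) (s : seq I) (y : I -> int -> K) :
  (forall i, solves a (y i)) -> solves a (fun n => \sum_(i <- s) y i n).
Proof.
move=> y_sol n; under eq_bigr do rewrite big_distrr.
by rewrite exchange_big big1 // => i _; exact: y_sol.
Qed.

Lemma solves_restrict (P : pred int) (y : int -> K) :
  solves a y ->
  (forall n, (forall i : 'I_r.+1, ~~ P (n + (i : nat)%:Z)) \/
             (forall i : 'I_r.+1,
                ~~ P (n + (i : nat)%:Z) -> y (n + (i : nat)%:Z) = 0)) ->
  solves a (fun n => if P n then y n else 0).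
Proof.
move=> y_sol P_win n; case: (P_win n) => [outside | inside].
  by apply: big1 => i _; rewrite (negbTE (outside i)) mulr0.
rewrite -[RHS](y_sol n); apply: eq_bigr => i _.
by case: ifP => // /negbT /inside ->.
Qed.

Lemma solves_truncate_right (x : int -> K) (i : int) :
  solves a x -> (forall k, i < k <= i + r%:Z -> x k = 0) ->
  solves a (fun n => if n <= i then x n else 0).
Proof.
move=> x_sol gap; apply: solves_restrict => // n.
have [n_le | n_gt] := lerP n i; [right | left] => l; rewrite -ltNge.
  by move=> lt_l; apply: gap; have := ltn_ord l; lia.
by have := ltn_ord l; lia.
Qed.

Lemma solves_truncate_window (y : int -> K) (T : nat) :
  solves a y -> (forall n, (T < `|n| <= T + r)%N -> y n = 0) ->
  solves a (fun n => if (`|n| <= T)%N then y n else 0).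
Proof.
move=> y_sol band; apply: solves_restrict => // n.
have [n_in | n_out] := boolP (- (T + r)%:Z <= n <= T%:Z); [right | left] => l.
  by rewrite -ltnNge => lt_l; apply: band; have := ltn_ord l; lia.
by rewrite -ltnNge; have := ltn_ord l; lia.
Qed.

Lemma solution_in_annulus (L : nat) : infinite_dim_solutions a ->
  exists z : int -> K, exists M : nat, [/\ solves a z, exists n, z n != 0
    & forall n, z n != 0 -> (L <= `|n| <= M)%N].
Proof.
move=> infdim; have [f [f_sol f_indep]] := infdim (L.*2 + r.*2).+1.
have [T indepT] := lin_indep_window f_indep.
pose s := annulus 0 L ++ annulus T.+1 (T + r).+1.
have small : (size s < (L.*2 + r.*2).+1)%N.
  by rewrite size_cat !size_annulus; lia.
have [c [k ck] vanish] := exists_comb_vanishing f small.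
pose y n := \sum_k c k * f k n.
have y_sol : solves a y := solves_sum _ (fun k => solves_scale (c k) (f_sol k)).
have [t yt tT] : exists2 t, y t != 0 & (`|t| <= T)%N.
  apply: NNPP => none; move/eqP: ck; apply; apply: indepT => n.
  rewrite mem_window => nT; apply/eqP; apply: contraT => yn; case: none.
  by exists n.
exists (fun n => if (`|n| <= T)%N then y n else 0), T; split.
- apply: solves_truncate_window => // n band; apply: vanish.
  by rewrite mem_cat !mem_annulus ltnS band orbT.
- by exists t; rewrite tT.
- move=> n; case: ifP => [nT yn | _]; last by rewrite eqxx.
  rewrite andbT leqNgt; apply: contra yn => nL; apply/eqP/vanish.
  by rewrite mem_cat mem_annulus nL.
Qed.

Section Gluing.
Variables (z : nat -> int -> K) (lo hi : nat -> nat).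
Hypothesis z_sol : forall k, solves a (z k).
Hypothesis z_neq0 : forall k, exists n, z k n != 0.
Hypothesis z_supp : forall k n, z k n != 0 -> (lo k <= `|n| <= hi k)%N.
Hypothesis hi_lo : forall k, ((hi k).*2 < lo k.+1)%N.

Lemma lo_le_hi k : (lo k <= hi k)%N.
Proof. by have [n /z_supp] := z_neq0 k; lia. Qed.

Lemma hi_lt_lo j k : (j < k)%N -> (hi j < lo k)%N.
Proof.
elim: k => // k IHk; rewrite ltnS leq_eqVlt => /predU1P[-> | jk].
  by have := hi_lo k; lia.
by have := IHk jk; have := hi_lo k; have := lo_le_hi k; lia.
Qed.

Lemma lo_homo : {homo lo : j k / (j <= k)%N}.
Proof.
move=> j k; rewrite leq_eqVlt => /predU1P[-> // | /hi_lt_lo].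
by have := lo_le_hi j; lia.
Qed.

Lemma hi_homo : {homo hi : j k / (j <= k)%N}.
Proof.
move=> j k; rewrite leq_eqVlt => /predU1P[-> // | /hi_lt_lo].
by have := lo_le_hi k; lia.
Qed.

Lemma leq_lo k : (k <= lo k)%N.
Proof. by elim: k => // k IHk; have := hi_lo k; have := lo_le_hi k; lia. Qed.

Lemma z_vanish_below k n : (`|n| < k)%N -> z k n = 0.
Proof.
move=> nk; apply/eqP; apply: contraTT nk => /z_supp; rewrite -leqNgt.
by have := leq_lo k; lia.
Qed.

Lemma glue_solves : solves a (glue z).
Proof.
move=> n; pose B := (`|n| + r).+1.
rewrite -[RHS](solves_sum (index_enum 'I_B) (fun k => z_sol k) n).
apply: eq_bigr => i _; rewrite (glue_eq_sum z_vanish_below (B := B)) //.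
by have := ltn_ord i; lia.
Qed.

Lemma glue_on_annulus k n : (lo k <= `|n| <= hi k)%N -> glue z n = z k n.
Proof.
move=> n_in; pose B := (maxn `|n| k).+1.
have k_lt : (k < B)%N by rewrite ltnS leq_maxr.
rewrite (glue_eq_sum z_vanish_below (B := B)) ?ltnS ?leq_maxl //.
rewrite (bigD1 (Ordinal k_lt)) //= big1 ?addr0 // => j jk.
apply/eqP; apply: contraTT n_in => /z_supp.
have [lt_jk | lt_kj | eq_jk] := ltngtP j k.
- by have := hi_lt_lo lt_jk; lia.
- by have := hi_lt_lo lt_kj; lia.
- by move: jk; rewrite -val_eqE /= eq_jk eqxx.
Qed.

Lemma glue_gap k n : (hi k < `|n| < lo k.+1)%N -> glue z n = 0.
Proof.
move=> n_gap; rewrite /glue; apply: big1 => j _.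
apply/eqP; apply: contraTT n_gap => /z_supp.
have [/hi_homo | /lo_homo] := leqP j k; lia.
Qed.

Lemma glue_lacunary : lacunary (glue z).
Proof.
move=> N.
have [s zs] := z_neq0 N; have [t zt] := z_neq0 N.+1.
have s_in := z_supp zs; have t_in := z_supp zt.
have xs : glue z s != 0 by rewrite (glue_on_annulus s_in).
have xt : glue z t != 0 by rewrite (glue_on_annulus t_in).
have wide : (N + hi N < lo N.+1)%N.
  by have := hi_lo N; have := lo_le_hi N; have := leq_lo N; lia.
have [t_ge0 | t_lt0] := lerP 0 t.
  have [|||k k_in|i [j [ij gap_ij]]] := consecutive_supp_across
    (a := (hi N)%:Z) (b := (lo N.+1)%:Z) _ _ _ xs xt; try lia.
    by apply: (glue_gap (k := N)); lia.
  by exists i, j; split=> //; lia.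
have [|||k k_in|i [j [ij gap_ij]]] := consecutive_supp_across
  (a := - (lo N.+1)%:Z) (b := - (hi N)%:Z) _ _ _ xt xs; try lia.
  by apply: (glue_gap (k := N)); lia.
by exists i, j; split=> //; lia.
Qed.

End Gluing.

Lemma lacunary_solution_of_infinite_dim : infinite_dim_solutions a ->
  exists x, solves a x /\ lacunary x.
Proof.
move=> infdim.
have /functional_choice [z z_spec] := fun L => solution_in_annulus L infdim.
have /functional_choice [M M_spec] := z_spec.
pose lo k := iter k (fun L => (M L).*2.+1) 0%N.
pose hi k := M (lo k).
have z_sol k : solves a (z (lo k)) by case: (M_spec (lo k)).
have z_neq0 k : exists n, z (lo k) n != 0 by case: (M_spec (lo k)).
have z_supp k n : z (lo k) n != 0 -> (lo k <= `|n| <= hi k)%N.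
  by case: (M_spec (lo k)) => _ _; apply.
have hi_lo k : ((hi k).*2 < lo k.+1)%N by exact: ltnSn.
exists (glue (fun k => z (lo k))); split.
  exact: glue_solves z_sol z_neq0 z_supp hi_lo.
exact: glue_lacunary z_neq0 z_supp hi_lo.
Qed.

Lemma infinite_dim_of_lacunary_solution (x : int -> K) :
  solves a x -> lacunary x -> infinite_dim_solutions a.
Proof.
move=> x_sol /(lacunary_cuts r) [cut [cut_inj x_cut x_gap]] m.
exists (fun (k : 'I_m) n => if n <= cut k then x n else 0); split.
  by move=> k; apply: solves_truncate_right => //; exact: x_gap.
apply: lin_indep_truncations => [j k /cut_inj /val_inj // | k]; exact: x_cut.
Qed.

End Recurrence.

Theorem theorem1 (K : fieldType) (r : nat) (a : 'I_r.+1 -> int -> K) :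
  infinite_dim_solutions a <-> (exists x : int -> K, solves a x /\ lacunary x).
Proof.
split; first exact: lacunary_solution_of_infinite_dim.
by case=> x [x_sol x_lac]; exact: infinite_dim_of_lacunary_solution x_sol x_lac.
Qed.
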